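(* Let $r\geq2$ and $\ell\geq1$ be integers and $c>0$. Let $\mathcal{H}$ be an $\ell$-partite $\ell$-uniform hypergraph with parts $V_1,\dots,V_\ell$, each of size $n$, having at least $\ell c n^\ell$ edges. Let $\varphi$ be an $r$-colouring of the edges of the complete graphs on $V_1,\dots,V_\ell$ (i.e. of all pairs inside each $V_i$). Then there exist an integer $m\geq \left(\min\{\frac c2,\frac{1}{2r\log r}\}\right)^\ell\log n$ and sets $S_i\subseteq V_i$ with $|S_i|=m$ for $i\in[\ell]$ such that $\varphi$ is constant on the pairs inside each $S_i$, and $\mathcal{H}$ covers the complete $\ell$-partite graph with parts $S_1,\dots,S_\ell$.
   Context: Edges of $\mathcal{H}$ are $\ell$-tuples $(v_1,\dots,v_\ell)$ with $v_i\in V_i$. Let $K_2(\mathcal{H})$ be the set of vertex pairs contained in some edge of $\mathcal{H}$. For a complete $\ell$-partite graph $F$ with parts of size $m$, we say $\mathcal{H}$ covers $F$ if every edge of $F$ belongs to $K_2(\mathcal{H})$ and there are $m$ pairwise disjoint edges of $\mathcal{H}$ each contained in $V(F)$. *)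

From HB Require Import structures.
From mathcomp Require Import all_boot all_order all_algebra.
From mathcomp Require Import all_classical all_reals all_analysis.
Set Implicit Arguments. Unset Strict Implicit. Unset Printing Implicit Defensive.
Import Order.TTheory GRing.Theory Num.Theory.

(* Vertices of the l-partite hypergraph: vertex (i, v) with i : 'I_l the part
   index and v : 'I_n the position inside V_i.  An edge (v_1,...,v_l) with
   v_i in V_i is a finite function e : 'I_l -> 'I_n. *)
Definition edge (l n : nat) := {ffun 'I_l -> 'I_n}.

Definition inK2 (l n : nat) (H : {set edge l n}) (i j : 'I_l) (u v : 'I_n) : bool :=
  [exists e in H, (e i == u) && (e j == v)].

Definition covers (l n : nat) (H : {set edge l n}) (S : 'I_l -> {set 'I_n}) (m : nat) : Prop :=
  (forall i j : 'I_l, i != j -> forall u v : 'I_n, u \in S i -> v \in S j -> inK2 H i j u v)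
  /\ exists M : {set edge l n},
     [/\ M \subset H, #|M| = m,
         (forall e, e \in M -> forall i, e i \in S i)
       & (forall e f, e \in M -> f \in M -> e != f -> forall i, e i != f i)].

(* phi i colours the pairs inside V_i; a pair {u,v} (u != v) is the 2-set [set u; v].
   S_i is monochromatic if all pairs inside S_i get the same colour. *)
Definition monochromatic (l n r : nat) (phi : 'I_l -> {set 'I_n} -> 'I_r)
  (i : 'I_l) (S : {set 'I_n}) : Prop :=
  exists k : 'I_r, forall u v : 'I_n, u \in S -> v \in S -> u != v -> phi i [set u; v] = k.

(* Induction on l.  Call an l-tuple f heavy if its link, the set of vertices
   y of the last part with (f, y) an edge of H, has at least c n elements; an
   (l+1)-partite H of density (l+1) c has at least l c n^l heavy l-tuples.  By
   induction they contain a monochromatic structure covered by a matching M' of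
   m' >= eps^l log n heavy tuples.  A Kovari-Sos-Turan count (Jensen for falling
   factorials) finds m ~ eps m' of them whose links share n (c/2)^m vertices,
   which is at least r^(r(m-1)) because m - 1 <= eps^(l+1) log n, so Ramsey's
   theorem yields m of these vertices spanning a monochromatic set.  Pairing
   them with the m chosen tuples gives the new matching; all the pairs between
   the new part and the old ones are covered by construction. *)

From HB Require Import structures.
From mathcomp Require Import all_boot all_order all_algebra.
From mathcomp Require Import all_classical all_reals all_analysis.
From mathcomp Require Import zify ring lra.
From mathcomp Require Import fintype finset.
Set Implicit Arguments. Unset Strict Implicit. Unset Printing Implicit Defensive.
Import Order.TTheory GRing.Theory Num.Theory.
Local Open Scope ring_scope.

(** * Ramsey's theorem for pairs *)

Lemma pigeonhole_fiber (T : finType) r (f : T -> 'I_r) (A : {set T}) p :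
  (r * p < #|A|)%N -> exists k, (p < #|[set x in A | f x == k]|)%N.
Proof.
have [k hk|small] := pickP (fun k => p < #|[set x in A | f x == k]|)%N.
  by exists k.
have -> : #|A| = (\sum_k #|[set x in A | f x == k]|)%N.
  rewrite -sum1_card (partition_big f predT) //=; apply: eq_bigr => k _.
  by rewrite -sum1_card; apply: eq_bigl => x; rewrite inE.
rewrite ltnNge => /negP; case; rewrite -[X in (X * p)%N]card_ord -sum_nat_const.
by apply: leq_sum => k _; rewrite leqNgt small.
Qed.

Definition monocolour (T : finType) r (col : {set T} -> 'I_r) (k : 'I_r) (S : {set T}) :=
  forall u v, u \in S -> v \in S -> u != v -> col [set u; v] = k.

Lemma monocolour1 (T : finType) r (col : {set T} -> 'I_r) k x : monocolour col k [set x].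
Proof. by move=> u v /set1P-> /set1P->; rewrite eqxx. Qed.

Lemma monocolourU1 (T : finType) r (col : {set T} -> 'I_r) k x S :
  monocolour col k S -> (forall y, y \in S -> col [set x; y] = k) ->
  monocolour col k (x |: S).
Proof.
move=> mS colx u v /setU1P[->|uS] /setU1P[->|vS]; rewrite ?eqxx // => uv.
- exact: colx.
- by rewrite setUC; apply: colx.
- exact: mS.
Qed.

(* Erdos-Szekeres: a vertex x splits the rest of Z by the colour of {x, y}; some
   class is large enough to recurse into with the budget of its colour lowered. *)
Lemma ramsey_budget (T : finType) r (col : {set T} -> 'I_r) (a : 'I_r -> nat)
    (Z : {set T}) :
  (1 < r)%N -> (r ^ (\sum_k a k) <= #|Z|)%N ->
  exists k (S : {set T}), [/\ S \subset Z, #|S| = (a k).+1 & monocolour col k S].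
Proof.
move=> r1; move sa: (\sum_k a k)%N => s.
have single a' (Z' : {set T}) k : a' k = 0%N -> (0 < #|Z'|)%N ->
    exists k (S : {set T}), [/\ S \subset Z', #|S| = (a' k).+1 & monocolour col k S].
  move=> ak0 /card_gt0P[x xZ]; exists k, [set x].
  by rewrite sub1set xZ cards1 ak0; split=> //; apply: monocolour1.
have Z0 (Z' : {set T}) s' : (r ^ s' <= #|Z'|)%N -> (0 < #|Z'|)%N.
  by apply: leq_trans; rewrite expn_gt0 ltnW.
elim: s a Z sa => [|s IH] a Z sa hZ.
  apply: (single a Z (Ordinal (ltnW r1)) _ (Z0 _ _ hZ)); apply/eqP.
  by move/eqP: sa; rewrite sum_nat_eq0 => /forallP/(_ (Ordinal (ltnW r1))).
have [k /eqP ak0|apos] := pickP (fun k => a k == 0%N); first exact: single ak0 (Z0 _ _ hZ).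
have [x xZ] := card_gt0P (Z0 _ _ hZ).
pose C k := [set y in Z :\ x | col [set x; y] == k].
have [k hk] : exists k, (r ^ s <= #|C k|)%N.
  have [|k] := @pigeonhole_fiber _ r (fun y => col [set x; y]) (Z :\ x) (r ^ s).-1.
    have rp : (r <= r * r ^ s)%N by rewrite leq_pmulr // expn_gt0 ltnW.
    move: hZ; rewrite (cardsD1 x Z) xZ expnS -subn1 mulnBr muln1.
    by move: rp; move: (r * r ^ s)%N => p; lia.
  by rewrite prednK ?expn_gt0 ?(ltnW r1) //; exists k.
pose a' i := if i == k then (a i).-1 else a i.
have sa' : (\sum_i a' i)%N = s.
  move: sa; rewrite (bigD1 k) //= => sa; rewrite (bigD1 k) //= /a' eqxx.
  rewrite (eq_bigr a) => [|i /negbTE -> //].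
  have : (0 < a k)%N by rewrite lt0n apos.
  by move: sa; move: (a k) (\sum_(i | i != k) a i)%N => ak X; lia.
have [k' [S [sSC cS mS]]] := IH a' (C k) sa' hk.
have sSZ : S \subset Z :\ x.
  by apply/subsetP => y /(subsetP sSC); rewrite inE => /andP[].
have [ek|nk] := eqVneq k' k; last first.
  exists k', S; split => //; first by apply: subset_trans sSZ (subsetDl _ _).
  by rewrite cS /a' (negbTE nk).
subst k'; exists k, (x |: S); split.
- by rewrite subUset sub1set xZ (subset_trans sSZ (subsetDl _ _)).
- have xS : x \notin S by apply/negP => /(subsetP sSZ); rewrite !inE eqxx.
  by rewrite cardsU1 xS cS /a' eqxx add1n prednK // lt0n apos.
apply: monocolourU1 mS _ => y /(subsetP sSC).
by rewrite inE => /andP[_ /eqP].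
Qed.

Lemma ramsey (T : finType) r (col : {set T} -> 'I_r) m (Z : {set T}) :
  (1 < r)%N -> (0 < m)%N -> (r ^ (r * m.-1) <= #|Z|)%N ->
  exists k (S : {set T}), [/\ S \subset Z, #|S| = m & monocolour col k S].
Proof.
move=> r1 m0; rewrite -[X in (X * _)%N]card_ord -sum_nat_const.
move=> /(ramsey_budget col r1)[k [S [sSZ cS mS]]].
by exists k, S; rewrite cS prednK.
Qed.

Lemma ramsey_threshold_le (R : numDomainType) (T : finType) (Z : {set T}) (B : R) r t :
  0 < B -> B <= #|Z|%:R -> ((0 < t)%N -> ((r ^ (r * t))%:R : R) <= B) ->
  (r ^ (r * t) <= #|Z|)%N.
Proof.
move=> B0 BZ; case: t => [_|t /(_ (ltn0Sn t)) rB].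
  by rewrite muln0 expn0 -(ltr0n R) (lt_le_trans B0).
by rewrite -(ler_nat R) (le_trans rB).
Qed.

(** * Falling factorials and common neighbourhoods *)

Lemma chebyshev_sum (R : realDomainType) (I : finType) (a b : I -> R) :
  (forall y z, 0 <= (a y - a z) * (b y - b z)) ->
  (\sum_y a y) * (\sum_y b y) <= #|I|%:R * \sum_y a y * b y.
Proof.
move=> comono.
have diag : \sum_y \sum_(z : I) a y * b y = #|I|%:R * \sum_y a y * b y.
  by rewrite mulr_sumr; apply: eq_bigr => y _; rewrite sumr_const mulr_natl.
have diag' : \sum_(y : I) \sum_z a z * b z = #|I|%:R * \sum_y a y * b y.
  by rewrite sumr_const mulr_natl.
have cross : \sum_y \sum_z a y * b z = (\sum_y a y) * (\sum_y b y).
  by rewrite big_distrlr.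
have cross' : \sum_y \sum_z a z * b y = (\sum_y a y) * (\sum_y b y).
  by rewrite mulrC big_distrlr; apply: eq_bigr => y _; apply: eq_bigr => z _; rewrite mulrC.
have : 0 <= \sum_y \sum_z (a y - a z) * (b y - b z).
  by apply: sumr_ge0 => y _; apply: sumr_ge0.
have -> : \sum_y \sum_z (a y - a z) * (b y - b z)
   = \sum_y \sum_(z : I) a y * b y - \sum_y \sum_z a y * b z
     - \sum_y \sum_z a z * b y + \sum_(y : I) \sum_z a z * b z.
  rewrite -!sumrB -big_split /=; apply: eq_bigr => y _.
  by rewrite -!sumrB -big_split /=; apply: eq_bigr => z _; ring.
rewrite diag diag' cross cross'; lra.
Qed.

Lemma leq_ffactl m a b : (a <= b)%N -> (a ^_ m <= b ^_ m)%N.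
Proof. by move=> ab; rewrite !ffact_prod; apply: leq_prod => i _; apply: leq_sub2r. Qed.

Lemma natr_ffactSr (R : pzRingType) d m :
  ((d ^_ m.+1)%:R : R) = (d ^_ m)%:R * (d%:R - m%:R).
Proof.
rewrite ffactnSr natrM; have [md|dm] := leqP m d; first by rewrite natrB.
by rewrite ffact_small // !mul0r.
Qed.

Lemma ffact_comonotone (R : realDomainType) m x y :
  0 <= ((x ^_ m)%:R - (y ^_ m)%:R : R) * (x%:R - y%:R).
Proof.
wlog xy : x y / (y <= x)%N.
  move=> sym; have [/sym //|/ltnW /sym] := leqP y x.
  by rewrite -mulrNN !opprB.
by apply: mulr_ge0; rewrite subr_ge0 ler_nat ?leq_ffactl.
Qed.

(* Jensen's inequality for the convex map x |-> x ^_ m on integers, proved by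
   induction on m: Chebyshev's sum inequality applies because d y ^_ m and
   d y - m are sorted alike. *)
Lemma sum_ffact_ge (R : realDomainType) (I : finType) (d : I -> nat) (A : R) m :
  #|I|%:R * A <= \sum_y (d y)%:R -> m%:R - 1 <= A ->
  #|I|%:R * \prod_(i < m) (A - i%:R) <= \sum_y ((d y) ^_ m)%:R.
Proof.
have [I0 _ _|I0 avg] := posnP #|I|.
  by rewrite I0 mul0r sumr_ge0.
elim: m => [|m IH] mA.
  by rewrite big_ord0 mulr1 (eq_bigr (fun=> 1)) // sumr_const.
have mA' : m%:R <= A by move: mA; rewrite -natr1; lra.
have P0 : 0 <= \prod_(i < m) (A - i%:R).
  by apply: prodr_ge0 => i _; rewrite subr_ge0 (le_trans _ mA') // ler_nat ltnW.
rewrite big_ord_recr /=.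
set P := \prod_(i < m) _ in P0 IH *.
under eq_bigr => y _ do rewrite natr_ffactSr.
have avgm : #|I|%:R * (A - m%:R) <= \sum_y ((d y)%:R - m%:R).
  by rewrite sumrB sumr_const -(mulr_natl m%:R #|I|) mulrBr lerD2r.
have comono y z : 0 <= ((d y ^_ m)%:R - (d z ^_ m)%:R : R)
    * (((d y)%:R - m%:R) - ((d z)%:R - m%:R)).
  have -> : (d y)%:R - m%:R - ((d z)%:R - m%:R) = (d y)%:R - (d z)%:R :> R by ring.
  exact: ffact_comonotone.
have cheb := @chebyshev_sum R I (fun y => (d y ^_ m)%:R) (fun y => (d y)%:R - m%:R) comono.
have prodle : (#|I|%:R * P) * (#|I|%:R * (A - m%:R))
    <= (\sum_y ((d y) ^_ m)%:R) * (\sum_y ((d y)%:R - m%:R)).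
  by apply: ler_pM; rewrite ?IH ?mulr_ge0 ?subr_ge0 //; lra.
rewrite -(ler_pM2l (_ : 0 < #|I|%:R)) ?ltr0n //.
apply: le_trans cheb; apply: le_trans prodle.
by rewrite le_eqVlt; apply/orP; left; apply/eqP; ring.
Qed.

Lemma sum_card_incident (T U : finType) (M : {set T}) (N : T -> {set U}) :
  (\sum_y #|[set f in M | y \in N f]| = \sum_(f in M) #|N f|)%N.
Proof.
transitivity (\sum_y \sum_(f in M) (y \in N f))%N.
  apply: eq_bigr => y _; rewrite -sum1dep_card big_mkcondr.
  by apply: eq_bigr => f _; case: (_ \in _).
by rewrite exchange_big; apply: eq_bigr => f _; rewrite -sum1_card [RHS]big_mkcond.
Qed.

(* Sum over y of C(deg y, m) counts the pairs (K, y) of an m-subset K of M and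
   a point y of its common part; K is chosen with the largest common part. *)
Lemma sum_ffact_degree_le (T U : finType) (M : {set T}) (N : T -> {set U}) m :
  (m <= #|M|)%N ->
  exists2 K : {set T}, (K \subset M) && (#|K| == m) &
    (\sum_y #|[set f in M | y \in N f]| ^_ m <= #|M| ^_ m * #|\bigcap_(f in K) N f|)%N.
Proof.
move=> mM; pose Ks := [set K : {set T} | K \subset M & #|K| == m].
have [K0 K0Ks] : exists K0, K0 \in Ks.
  by apply/card_gt0P; rewrite cards_draws bin_gt0.
have [K KKs Kmax] := @arg_maxnP _ K0 (fun K => K \in Ks)
  (fun K => #|\bigcap_(f in K) N f|) K0Ks.
exists K; first by move: KKs; rewrite inE.
have binom y : 'C(#|[set f in M | y \in N f]|, m)
    = #|[set K' in Ks | y \in \bigcap_(f in K') N f]|.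
  rewrite -cards_draws; apply: eq_card => K'; rewrite !inE.
  case: (#|K'| == m); rewrite ?andbF ?andbT //.
  apply/subsetP/andP => [sub|[/subsetP sM /bigcapP yN] f fK].
    split; first by apply/subsetP => f /sub; rewrite inE => /andP[].
    by apply/bigcapP => f /sub; rewrite inE => /andP[].
  by rewrite inE sM ?yN.
under eq_bigr => y _ do rewrite -bin_ffact binom.
rewrite -big_distrl /= sum_card_incident -bin_ffact -cards_draws -/Ks mulnAC.
rewrite leq_mul2r -sum_nat_const; apply/orP; right.
by apply: leq_sum => K' /Kmax.
Qed.

Lemma ffact_scale_le (R : realFieldType) (c : R) N m :
  0 <= c -> (m <= N)%N -> (m%:R - 1) * 2 <= c * N%:R ->
  (c / 2) ^+ m * (N ^_ m)%:R <= \prod_(i < m) (c * N%:R - i%:R).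
Proof.
move=> c0 mN mc.
rewrite ffact_prod natr_prod -[in X in X * _](card_ord m) -prodr_const -big_split /=.
apply: ler_prod => i _.
have iN : (i <= N)%N by apply: leq_trans (ltnW (ltn_ord i)) mN.
have im : (i%:R + 1 : R) <= m%:R by rewrite natr1 ler_nat ltn_ord.
have ci : 0 <= c * i%:R by apply: mulr_ge0.
have iN' : (i%:R : R) <= N%:R by rewrite ler_nat.
rewrite natrB // mulr_ge0 ?divr_ge0 ?subr_ge0 //= mulrBr; lra.
Qed.

Lemma common_part_large (R : realFieldType) (T U : finType) (M : {set T})
    (N : T -> {set U}) (c : R) m :
  0 <= c -> (forall f, f \in M -> c * #|U|%:R <= #|N f|%:R) ->
  (m <= #|M|)%N -> (m%:R - 1) * 2 <= c * #|M|%:R ->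
  exists K : {set T}, [/\ K \subset M, #|K| = m &
    #|U|%:R * (c / 2) ^+ m <= #|\bigcap_(f in K) N f|%:R].
Proof.
move=> c0 largeN mM mc.
have [K /andP[KM /eqP cK] sum_le] := @sum_ffact_degree_le _ _ M N m mM.
exists K; split=> //.
have avg : #|U|%:R * (c * #|M|%:R) <= \sum_y (#|[set f in M | y \in N f]|)%:R.
  rewrite -natr_sum sum_card_incident natr_sum.
  apply: le_trans (ler_sum _ largeN); rewrite sumr_const -mulr_natr.
  by rewrite le_eqVlt; apply/orP; left; apply/eqP; ring.
have cM : m%:R - 1 <= c * #|M|%:R by have := mulr_ge0 c0 (ler0n R #|M|); lra.
have Mm0 : (0 : R) < (#|M| ^_ m)%:R by rewrite ltr0n ffact_gt0.
rewrite -(ler_pM2r Mm0) -mulrA [leRHS]mulrC.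
apply: le_trans (_ : #|U|%:R * \prod_(i < m) (c * #|M|%:R - i%:R) <= _).
  by apply: ler_wpM2l => //; apply: ffact_scale_le.
by apply: le_trans (sum_ffact_ge avg cM) _; rewrite -natrM -natr_sum ler_nat.
Qed.

(** * Links in l-partite hypergraphs *)

Section Edges.
Variables l n : nat.

Definition edge_rcons (f : edge l n) (y : 'I_n) : edge l.+1 n :=
  [ffun i => if unlift ord_max i is Some j then f j else y].

Definition edge_init (e : edge l.+1 n) : edge l n := [ffun j => e (lift ord_max j)].

Definition link (H : {set edge l.+1 n}) (f : edge l n) : {set 'I_n} :=
  [set y | edge_rcons f y \in H].

Lemma edge_rcons_lift f y j : edge_rcons f y (lift ord_max j) = f j.
Proof. by rewrite ffunE liftK. Qed.

Lemma edge_rcons_max f y : edge_rcons f y ord_max = y.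
Proof. by rewrite ffunE unlift_none. Qed.

Lemma edge_rcons_inj f : injective (edge_rcons f).
Proof. by move=> y y' eq_e; rewrite -(edge_rcons_max f y) eq_e edge_rcons_max. Qed.

Lemma edge_rconsK f y : edge_init (edge_rcons f y) = f.
Proof. by apply/ffunP => j; rewrite ffunE edge_rcons_lift. Qed.

Lemma edge_initK e : edge_rcons (edge_init e) (e ord_max) = e.
Proof. by apply/ffunP => i; rewrite ffunE; case: unliftP => [j ->|->]; rewrite ?ffunE. Qed.

Lemma card_edge : #|{: edge l n}| = (n ^ l)%N.
Proof. by rewrite card_ffun !card_ord. Qed.

Lemma card_link (H : {set edge l.+1 n}) f :
  #|link H f| = #|[set e in H | edge_init e == f]|.
Proof.
rewrite -(card_imset _ (@edge_rcons_inj f)); apply: eq_card => e.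
apply/imsetP/idP => [[y]|]; first by rewrite inE => yH ->; rewrite inE yH edge_rconsK eqxx.
by rewrite inE => /andP[eH /eqP <-]; exists (e ord_max); rewrite ?inE edge_initK.
Qed.

Lemma card_edges_by_init (H : {set edge l.+1 n}) :
  #|H| = (\sum_(f : edge l n) #|link H f|)%N.
Proof.
rewrite -sum1_card (partition_big edge_init predT) //=; apply: eq_bigr => f _.
by rewrite card_link -sum1_card; apply: eq_bigl => e; rewrite inE.
Qed.

End Edges.

Lemma density_le1 (R : numDomainType) l n (c : R) (H : {set edge l n}) :
  (0 < n)%N -> l%:R * c * n%:R ^+ l <= #|H|%:R -> l%:R * c <= 1.
Proof.
move=> n0 dense; have : (#|H| <= n ^ l)%N by rewrite -card_edge max_card.
rewrite -(ler_nat R) natrX => /(le_trans dense).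
by rewrite -[leRHS]mul1r ler_pM2r // exprn_gt0 // ltr0n.
Qed.

Lemma card_heavy_inits (R : realDomainType) l n (c : R) (H : {set edge l.+1 n}) :
  0 <= c -> (0 < n)%N -> l.+1%:R * c * n%:R ^+ l.+1 <= #|H|%:R ->
  l%:R * c * n%:R ^+ l <= #|[set f | c * n%:R <= #|link H f|%:R]|%:R.
Proof.
move=> c0 n0; set heavy := [set f | _]; set P := n%:R ^+ l.
have link_le f : (#|link H f|%:R : R) <= (if f \in heavy then n%:R else 0) + c * n%:R.
  have cn : 0 <= c * n%:R by rewrite mulr_ge0.
  have : (#|link H f| <= n)%N by rewrite -[n in (_ <= n)%N]card_ord max_card.
  by rewrite -(ler_nat R) inE; case: ifP => [_|/negbT]; rewrite -?ltNge; lra.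
have : (#|H|%:R : R) <= n%:R *+ #|heavy| + (c * n%:R) *+ (n ^ l).
  rewrite card_edges_by_init natr_sum; apply: le_trans (ler_sum _ (fun f _ => link_le f)) _.
  rewrite big_split /= -big_mkcond /= !sumr_const.
  by rewrite (_ : #|predT| = #|{: edge l n}|) // card_edge.
rewrite -[n%:R *+ _]mulr_natr -[(c * n%:R) *+ _]mulr_natr natrX -/P.
move=> le_card dense; rewrite -(ler_pM2r (_ : 0 < n%:R)) ?ltr0n //.
by move: (le_trans dense le_card); rewrite exprSr -/P -natr1; lra.
Qed.

Section RconsParts.
Variables (l n r m : nat) (H : {set edge l.+1 n}) (phi : 'I_l.+1 -> {set 'I_n} -> 'I_r).
Variables (k : 'I_m -> edge l n) (s : 'I_m -> 'I_n).

Definition rcons_parts (i : 'I_l.+1) : {set 'I_n} :=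
  if unlift ord_max i is Some j then [set k a j | a in 'I_m] else [set s a | a in 'I_m].

Hypothesis k_disjoint : forall a b, a != b -> forall j, k a j != k b j.
Hypothesis s_inj : injective s.

Lemma card_rcons_parts i : #|rcons_parts i| = m.
Proof.
rewrite /rcons_parts; case: unliftP => [j _|_]; rewrite card_imset ?card_ord //.
by move=> a b kab; case: (eqVneq a b) => // /k_disjoint/(_ j); rewrite kab eqxx.
Qed.

Lemma rcons_parts_mono :
  (forall j, monochromatic phi (lift ord_max j) [set k a j | a in 'I_m]) ->
  monochromatic phi ord_max [set s a | a in 'I_m] ->
  forall i, monochromatic phi i (rcons_parts i).
Proof. by move=> k_mono s_mono i; rewrite /rcons_parts; case: unliftP => [j ->|->]. Qed.

Hypothesis ks_edge : forall a b, edge_rcons (k a) (s b) \in H.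

Lemma covers_rcons_parts :
  (forall j j', j != j' -> forall a b,
     inK2 H (lift ord_max j) (lift ord_max j') (k a j) (k b j')) ->
  covers H rcons_parts m.
Proof.
move=> k_cross; split.
  move=> i i' ii' u v; rewrite /rcons_parts.
  case: unliftP ii' => [j ->|->]; case: unliftP => [j' ->|->] => ii';
    move=> /imsetP[a _ ->] /imsetP[b _ ->].
  - by apply: k_cross; apply: contra ii' => /eqP->.
  - by apply/existsP; exists (edge_rcons (k a) (s b));
      rewrite ks_edge edge_rcons_lift edge_rcons_max !eqxx.
  - by apply/existsP; exists (edge_rcons (k b) (s a));
      rewrite ks_edge edge_rcons_lift edge_rcons_max !eqxx.
  - by rewrite eqxx in ii'.
exists [set edge_rcons (k a) (s a) | a in 'I_m]; split.
- by apply/subsetP => e /imsetP[a _ ->].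
- rewrite card_imset ?card_ord // => a b eq_e; apply: s_inj.
  by rewrite -(edge_rcons_max (k a) (s a)) eq_e edge_rcons_max.
- move=> e /imsetP[a _ ->] i; rewrite /rcons_parts.
  by case: unliftP => [j ->|->]; rewrite ?edge_rcons_lift ?edge_rcons_max; apply/imsetP; exists a.
- move=> e f /imsetP[a _ ->] /imsetP[b _ ->] ef i.
  have ab : a != b by apply: contra ef => /eqP->.
  case: (unliftP ord_max i) => [j ->|->]; rewrite ?edge_rcons_lift ?edge_rcons_max.
    exact: k_disjoint.
  by rewrite (inj_eq s_inj).
Qed.

End RconsParts.

Lemma enum_set_ord (T : finType) (A : {set T}) m :
  #|A| = m -> exists2 f : 'I_m -> T, injective f & A = [set f a | a in 'I_m].
Proof.
move=> <-; exists enum_val; first exact: enum_val_inj.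
apply/setP => x; apply/idP/imsetP => [xA|[a _ ->]]; last exact: enum_valP.
by exists (enum_rank_in xA x); rewrite ?enum_rankK_in.
Qed.

Lemma monochromatic_subset l n r (phi : 'I_l -> {set 'I_n} -> 'I_r) i
    (A B : {set 'I_n}) :
  A \subset B -> monochromatic phi i B -> monochromatic phi i A.
Proof.
move=> /subsetP AB [k mono]; exists k => u v uA vA; exact: mono (AB u uA) (AB v vA).
Qed.

Lemma inK2_rcons l n (H : {set edge l.+1 n}) (H' : {set edge l n}) j j' u v :
  (forall f, f \in H' -> link H f != set0) -> inK2 H' j j' u v ->
  inK2 H (lift ord_max j) (lift ord_max j') u v.
Proof.
move=> linked /existsP[f /andP[fH' fjuv]]; have /set0Pn[y] := linked f fH'.
by rewrite inE => fyH; apply/existsP; exists (edge_rcons f y); rewrite fyH !edge_rcons_lift.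
Qed.

Section ExtendCover.
Variables (l n r m : nat) (H : {set edge l.+1 n}) (H' : {set edge l n}).
Variables (phi : 'I_l.+1 -> {set 'I_n} -> 'I_r) (S' : 'I_l -> {set 'I_n}).
Variables (M' K : {set edge l n}) (S : {set 'I_n}).

Hypothesis linked : forall f, f \in H' -> link H f != set0.
Hypothesis crossS' : forall j j', j != j' ->
  forall u v, u \in S' j -> v \in S' j' -> inK2 H' j j' u v.
Hypothesis monoS' : forall j, monochromatic phi (lift ord_max j) (S' j).
Hypothesis M'S' : forall e, e \in M' -> forall j, e j \in S' j.
Hypothesis M'disj : forall e f, e \in M' -> f \in M' -> e != f -> forall j, e j != f j.
Hypotheses (KM' : K \subset M') (cardK : #|K| = m).
Hypotheses (S_common : S \subset \bigcap_(f in K) link H f) (cardS : #|S| = m).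
Hypothesis monoS : monochromatic phi ord_max S.

Lemma extend_cover : exists S_ : 'I_l.+1 -> {set 'I_n},
  [/\ forall i, #|S_ i| = m, forall i, monochromatic phi i (S_ i) & covers H S_ m].
Proof.
have [k k_inj defK] := enum_set_ord cardK.
have [s s_inj defS] := enum_set_ord cardS.
have kM' a : k a \in M' by apply: (subsetP KM'); rewrite defK; apply/imsetP; exists a.
have k_disj a b : a != b -> forall j, k a j != k b j.
  by move=> ab; apply: M'disj; rewrite ?kM' ?(inj_eq k_inj).
exists (rcons_parts k s); split.
- exact: card_rcons_parts.
- apply: rcons_parts_mono => [j|]; last by rewrite -defS.
  apply: monochromatic_subset (monoS' j).
  by apply/subsetP => _ /imsetP[a _ ->]; apply: M'S'.
apply: covers_rcons_parts => // [a b | j j' jj' a b].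
  have sbS : s b \in S by rewrite defS; apply/imsetP; exists b.
  have /bigcapP/(_ (k a)) := subsetP S_common _ sbS.
  by rewrite inE; apply; rewrite defK; apply/imsetP; exists a.
apply: inK2_rcons linked _.
exact: crossS' jj' _ _ (M'S' (kM' a) j) (M'S' (kM' b) j').
Qed.

End ExtendCover.

(** * Numerical estimates *)

Definition eps (R : realType) (r : nat) (c : R) : R :=
  Num.min (c / 2) (1 / (2 * r%:R * ln (r%:R : R))).

Lemma ln_natr_gt0 (R : realType) n : (0 < ln (n%:R : R)) = (1 < n)%N.
Proof.
apply/idP/idP => [|n1]; last by rewrite ln_gt0 // ltr1n.
by apply: contraTT; rewrite -leqNgt -leNgt => n1; rewrite ln_le0 // lern1.
Qed.

Section Numerics.
Variables (R : realType) (r : nat) (c : R).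
Hypotheses (r2 : (2 <= r)%N) (c0 : 0 < c).

Lemma rlnr_gt0 : 0 < r%:R * ln (r%:R : R).
Proof. by rewrite mulr_gt0 ?ln_gt0 ?ltr1n ?ltr0n // ltnW. Qed.

Lemma eps_gt0 : 0 < eps r c.
Proof.
rewrite lt_min; apply/andP; split; apply: divr_gt0 => //.
by rewrite -mulrA mulr_gt0 ?rlnr_gt0.
Qed.

Lemma eps_le_half : eps r c <= c / 2.
Proof. by rewrite ge_min lexx. Qed.

Lemma eps_rlnr_le_half : eps r c * (r%:R * ln (r%:R : R)) <= 1 / 2.
Proof.
have -> : 1 / 2 = 1 / (2 * r%:R * ln (r%:R : R)) * (r%:R * ln (r%:R : R)).
  by field; rewrite gt_eqF ?ln_gt0 ?ltr1n //= pnatr_eq0 -lt0n ltnW.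
by rewrite ler_pM2r ?rlnr_gt0 // ge_min lexx orbT.
Qed.

Lemma ln_ramsey_threshold t :
  ln ((r ^ (r * t))%:R : R) = t%:R * (r%:R * ln (r%:R : R)).
Proof. by rewrite natrX lnXn ?ltr0n 1?ltnW // -[_ *+ (r * t)]mulr_natl natrM; ring. Qed.

(* t r ln r <= L / 2 and - ln c <= 1 / c <= L / 2, where L = ln n. *)
Lemma base_threshold_le n t : (0 < t)%N ->
  t%:R <= eps r c * ln (n%:R : R) -> ((r ^ (r * t))%:R : R) <= c * n%:R.
Proof.
move=> t0 te; set L := ln (n%:R : R) in te.
have t1 : (1 : R) <= t%:R by rewrite ler1n.
have eL : eps r c * L <= c / 2 * L.
  by rewrite ler_pM2r ?eps_le_half // -(pmulr_rgt0 _ eps_gt0); lra.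
have L0 : 0 < L by rewrite -(pmulr_rgt0 _ eps_gt0); lra.
have n0 : (0 < n)%N by apply: ltnW; rewrite -(ln_natr_gt0 R).
rewrite -ler_ln ?posrE ?mulr_gt0 ?ltr0n ?expn_gt0 ?(ltnW r2) //.
rewrite ln_ramsey_threshold lnM ?posrE ?ltr0n // -/L.
have inv_c : - ln c <= 1 / c.
  by have := @ln_sublinear _ c^-1; rewrite invr_gt0 lnV ?posrE // div1r => /(_ c0)/ltW.
have c_L : 1 / c <= L / 2 by rewrite ler_pdivrMr // mulrC; lra.
have := eps_rlnr_le_half; have := rlnr_gt0.
move: (r%:R * ln (r%:R : R)) => Q Q0 eQ.
have tQ : t%:R * Q <= eps r c * L * Q by rewrite ler_pM2r.
have eQ_half : eps r c * Q * L <= 1 / 2 * L by rewrite ler_pM2r.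
lra.
Qed.

(* With Q = r ln r and q = ln (2 / c), both t Q and (t + 1) q are small
   multiples of e L <= L / 4. *)
Lemma step_threshold_le n t : c <= 1 / 2 -> (0 < t)%N ->
  t%:R <= eps r c ^+ 2 * ln (n%:R : R) ->
  ((r ^ (r * t))%:R : R) <= n%:R * (c / 2) ^+ t.+1.
Proof.
move=> c_half t0; set L := ln (n%:R : R); set e := eps r c; rewrite expr2 => te.
have t1 : (1 : R) <= t%:R by rewrite ler1n.
have e0 : 0 < e := eps_gt0.
have e_c : e <= c / 2 := eps_le_half.
have L0 : 0 < L.
  by rewrite -(pmulr_rgt0 _ (mulr_gt0 e0 e0)); lra.
have n0 : (0 < n)%N by apply: ltnW; rewrite -(ln_natr_gt0 R).
rewrite -ler_ln ?posrE ?mulr_gt0 ?exprn_gt0 ?divr_gt0 ?ltr0n ?expn_gt0 ?(ltnW r2) //.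
rewrite ln_ramsey_threshold lnM ?posrE ?ltr0n ?exprn_gt0 ?divr_gt0 // -/L.
rewrite lnXn ?divr_gt0 // -[_ *+ t.+1]mulr_natl -natr1.
have -> : ln (c / 2) = - ln (2 / c) by rewrite -lnV ?posrE ?divr_gt0 ?invf_div.
have q0 : 0 <= ln (2 / c) by rewrite ln_ge0 // ler_pdivlMr // mul1r; lra.
have q_le : ln (2 / c) <= 2 / c by rewrite ltW // ln_sublinear ?divr_gt0.
have := eps_rlnr_le_half; have := rlnr_gt0.
move: (r%:R * ln (r%:R : R)) (ln (2 / c)) q0 q_le => Q q q0 q_le Q0 eQ.
have eL0 : 0 <= e * L by rewrite mulr_ge0 // ltW.
have eL : e * L <= 1 / 4 * L by rewrite ler_pM2r //; lra.
have ramsey_part : t%:R * Q <= L / 8.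
  have tQ : t%:R * Q <= e * e * L * Q by rewrite ler_pM2r.
  have eQ_half : (e * Q) * (e * L) <= 1 / 2 * (e * L) by apply: ler_wpM2r.
  lra.
have colour_part : (t%:R + 1) * q <= L / 2.
  have tq2 : (t%:R + 1) * q <= 2 * t%:R * q by apply: ler_wpM2r => //; lra.
  have tq : t%:R * q <= e * e * L * q by apply: ler_wpM2r.
  have q_c : e * e * L * q <= 2 * (e * L) * (e / c).
    rewrite (_ : 2 * _ * _ = e * e * L * (2 / c)); last by field; rewrite gt_eqF.
    by apply: ler_wpM2l => //; rewrite !mulr_ge0 // ltW.
  have e_c' : 2 * (e * L) * (e / c) <= 2 * (e * L) * (1 / 2).
    apply: ler_wpM2l; first by rewrite mulr_ge0.
    by rewrite ler_pdivrMr //; lra.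
  lra.
lra.
Qed.

Lemma step_size_le t m' : c <= 1 / 2 -> (0 < m')%N -> t%:R <= eps r c * m'%:R ->
  (t < m')%N /\ (t.+1%:R - 1) * 2 <= c * m'%:R.
Proof.
move=> c_half m'0 te; have m'1 : (1 : R) <= m'%:R by rewrite ler1n.
have em : eps r c * m'%:R <= c / 2 * m'%:R by rewrite ler_pM2r ?ltr0n ?eps_le_half.
have cm : c * m'%:R <= 1 / 2 * m'%:R by rewrite ler_pM2r ?ltr0n.
by rewrite -(ltr_nat R) -natr1 addrK; split; lra.
Qed.

End Numerics.

(** * Induction on the number of parts *)

Definition large_mono_cover (R : realType) (r l n : nat) (c : R) (H : {set edge l n})
    (phi : 'I_l -> {set 'I_n} -> 'I_r) : Prop :=
  exists (m : nat) (S : 'I_l -> {set 'I_n}),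
    [/\ eps r c ^+ l * ln (n%:R : R) <= m%:R, (forall i, #|S i| = m),
        (forall i, monochromatic phi i (S i)) & covers H S m].

Lemma large_mono_cover0 (R : realType) r l n (c : R) (H : {set edge l n})
    (phi : 'I_l -> {set 'I_n} -> 'I_r) :
  (0 < r)%N -> eps r c ^+ l * ln (n%:R : R) <= 0 -> large_mono_cover c H phi.
Proof.
move=> r0 le0; exists 0%N, (fun=> set0); split=> //.
- by move=> i; rewrite cards0.
- by exists (Ordinal r0) => u v; rewrite inE.
split=> [i j _ u v|]; first by rewrite inE.
by exists set0; split; rewrite ?sub0set ?cards0 // => e; rewrite inE.
Qed.

Lemma large_mono_cover_base (R : realType) r n (c : R) (H : {set edge 1 n})
    (phi : 'I_1 -> {set 'I_n} -> 'I_r) :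
  (2 <= r)%N -> 0 < c -> 1%:R * c * n%:R ^+ 1 <= #|H|%:R -> large_mono_cover c H phi.
Proof.
move=> r2 c0 dense; set x := eps r c ^+ 1 * ln (n%:R : R).
have [x0|x_gt0] := lerP x 0; first exact: large_mono_cover0 (ltnW r2) x0.
have n1 : (1 < n)%N.
  by rewrite -(ln_natr_gt0 R) -(pmulr_rgt0 _ (exprn_gt0 1 (eps_gt0 r2 c0))).
(* Every edge of a 1-partite hypergraph extends the unique 0-tuple f0. *)
pose f0 : edge 0 n := [ffun=> Ordinal (ltnW n1)].
have card_link0 : #|link H f0| = #|H|.
  rewrite [RHS]card_edges_by_init (big_pred1 f0) // => f.
  suff -> : f = f0 by rewrite /= eqxx.
  by apply/ffunP => i; have := ltn_ord i; rewrite ltn0.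
set t := Num.truncn x.
have thr : (r ^ (r * t) <= #|link H f0|)%N.
  apply: (@ramsey_threshold_le _ _ _ (c * n%:R)); first by rewrite mulr_gt0 ?ltr0n 1?ltnW.
    by rewrite card_link0; move: dense; rewrite mul1r expr1.
  by move=> t0; apply: base_threshold_le => //; rewrite -[eps r c]expr1 /t truncn_le ltW.
have [col [S [S_link cardS monoS]]] := ramsey (phi ord_max) r2 (ltn0Sn t) thr.
have [s s_inj defS] := enum_set_ord cardS.
exists t.+1, (rcons_parts (fun=> f0) s); split.
- by rewrite ltW // truncnS_gt.
- by apply: card_rcons_parts => // a b _ j; have := ltn_ord j.
- apply: rcons_parts_mono => [j|]; first by have := ltn_ord j.
  by rewrite -defS; exists col.
apply: covers_rcons_parts => [a b _ j | // | a b | j]; try by have := ltn_ord j.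
have sbS : s b \in S by rewrite defS; apply/imsetP; exists b.
by have := subsetP S_link _ sbS; rewrite inE.
Qed.

Lemma large_mono_cover_step (R : realType) r l n (c : R) :
  (2 <= r)%N -> 0 < c -> (0 < l)%N ->
  (forall (H : {set edge l n}) (phi : 'I_l -> {set 'I_n} -> 'I_r),
     l%:R * c * n%:R ^+ l <= #|H|%:R -> large_mono_cover c H phi) ->
  forall (H : {set edge l.+1 n}) (phi : 'I_l.+1 -> {set 'I_n} -> 'I_r),
    l.+1%:R * c * n%:R ^+ l.+1 <= #|H|%:R -> large_mono_cover c H phi.
Proof.
move=> r2 c0 l0 IH H phi dense; set L := ln (n%:R : R); have e0 := eps_gt0 r2 c0.
have [x0|x_gt0] := lerP (eps r c ^+ l.+1 * L) 0; first exact: large_mono_cover0 (ltnW r2) x0.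
have L0 : 0 < L by rewrite -(pmulr_rgt0 _ (exprn_gt0 l.+1 e0)).
have n0 : (0 < n)%N by apply: ltnW; rewrite -(ln_natr_gt0 R).
have c_half : c <= 1 / 2.
  have : 2 * c <= l.+1%:R * c by rewrite ler_pM2r // ler_nat ltnS.
  by have := density_le1 n0 dense; lra.
have e1 : eps r c <= 1 by have := eps_le_half r c; lra.
pose heavy := [set f | c * n%:R <= #|link H f|%:R].
have linked f : f \in heavy -> link H f != set0.
  by rewrite inE -card_gt0 -(ltr0n R); apply: lt_le_trans; rewrite mulr_gt0 ?ltr0n.
have [m' [S' [le_m' _ monoS' [crossS' [M' [M'heavy cardM' M'S' M'disj]]]]]] :=
  IH heavy (fun j => phi (lift ord_max j)) (card_heavy_inits (ltW c0) n0 dense).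
set t := Num.truncn (eps r c ^+ l.+1 * L).
have t_le : t%:R <= eps r c ^+ l.+1 * L by rewrite truncn_le ltW.
have m'0 : (0 < m')%N by rewrite -(ltr0n R) (lt_le_trans _ le_m') // mulr_gt0 ?exprn_gt0.
have te : t%:R <= eps r c * m'%:R.
  by apply: le_trans t_le _; rewrite exprS -mulrA ler_pM2l.
have [t_m' tc] := step_size_le c_half m'0 te.
have largeM' f : f \in M' -> c * #|'I_n|%:R <= #|link H f|%:R.
  by move/(subsetP M'heavy); rewrite inE card_ord.
rewrite -cardM' in t_m' tc.
have [K [KM' cardK]] := common_part_large (ltW c0) largeM' t_m' tc.
rewrite card_ord => commonK.
have thr : (r ^ (r * t) <= #|\bigcap_(f in K) link H f|)%N.
  apply: (ramsey_threshold_le _ commonK); first by rewrite mulr_gt0 ?exprn_gt0 ?divr_gt0 ?ltr0n.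
  move=> t0; apply: step_threshold_le => //; apply: le_trans t_le _.
  by rewrite ler_pM2r //; apply: ler_wiXn2l => //; apply: ltW.
have [col [S [S_common cardS monoS]]] := ramsey (phi ord_max) r2 (ltn0Sn t) thr.
have [S_ [cardS_ monoS_ covS_]] := extend_cover linked crossS' monoS' M'S' M'disj KM' cardK
  S_common cardS (ex_intro _ col monoS).
by exists t.+1, S_; split; rewrite // ltW // truncnS_gt.
Qed.

Theorem lemma3p1 (R : realType) (r l n : nat) (c : R)
    (H : {set edge l n}) (phi : 'I_l -> {set 'I_n} -> 'I_r) :
  (2 <= r)%N -> (1 <= l)%N -> 0 < c ->
  l%:R * c * n%:R ^+ l <= #|H|%:R ->
  exists (m : nat) (S : 'I_l -> {set 'I_n}),
    [/\ (Num.min (c / 2) (1 / (2 * r%:R * ln (r%:R : R)))) ^+ l * ln (n%:R : R) <= m%:R,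
        (forall i, #|S i| = m),
        (forall i, monochromatic phi i (S i))
      & covers H S m].
Proof.
move=> r2 + c0; elim: l H phi => [|[|l] IH] H phi //= _ dense.
  exact: large_mono_cover_base.
exact: large_mono_cover_step r2 c0 _ (fun H' phi' => IH H' phi' isT) H phi dense.
Qed.
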